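(* Let $n,r\ge3$ and let $X$ be the real algebraic variety of $r$-tuples $\{(L_i,H_i)\}_{i=1,\dots,r}$ of flags in $\mathbb{R}^n$ consisting of a line $L_i$ and a hyperplane $H_i\supset L_i$, with the action of $\mathrm{SL}_{n,\mathbb{R}}$. Let $U(\mathbb{R})$ be the set of real $r$-tuples whose complexification is in general position, and let $\theta\colon U(\mathbb{R})/\mathrm{SL}_n(\mathbb{R})\to\mathbb{P}^{!r-1}(\mathbb{R})$ be the map induced by $x\mapsto[s_{\sigma_1}(x):\dots:s_{\sigma_{!r}}(x)]$, where $\sigma_1,\dots,\sigma_{!r}$ are the derangements of $\{1,\dots,r\}$. Then $\theta$ is injective if $n$ is odd or $n>r$, and $\theta$ is two-to-one if $n\le r$ and $n$ is even.
   Context: For a derangement (fixed-point-free permutation) $\sigma$, $s_\sigma(x)=\prod_{i=1}^r\phi_i(v_{\sigma(i)})$, where $v_i$ generates $L_i$ and $\phi_i$ is a (real) linear form with kernel $H_i$; the point $[s_\sigma(x)]_\sigma$ does not depend on these choices, and $!r$ is the number of derangements. General position (for complex flags in $\mathbb{C}^n$): if $n\ge r$, $\dim(L_1+\dots+L_r)=r$, $\dim(H_1\cap\dots\cap H_r)=n-r$, $L_i\cap H_j=0$ for $i\ne j$, and $(L_1+\dots+L_r)\cap(H_1\cap\dots\cap H_r)=0$; if $n<r$, every sub-$n$-tuple indexed by an $n$-element subset of $\{1,\dots,r\}$ satisfies these conditions. $U(\mathbb{R})/\mathrm{SL}_n(\mathbb{R})$ is the set of $\mathrm{SL}_n(\mathbb{R})$-orbits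 in $U(\mathbb{R})$ (these are closed orbits among real semi-stable points). *)

From HB Require Import structures.
From mathcomp Require Import all_boot all_order all_algebra all_fingroup.
From mathcomp Require Import reals complex.
Set Implicit Arguments. Unset Strict Implicit. Unset Printing Implicit Defensive.
Import Order.TTheory GRing.Theory Num.Theory.
Local Open Scope ring_scope.

(* Convention: vectors of F^n are row vectors 'rV[F]_n; a linear subspace of
   F^n is represented by a square matrix 'M[F]_n whose row space it is
   (mxalgebra).  A point of X (an r-tuple of flags L_i ⊂ H_i, L_i a line,
   H_i a hyperplane) is a pair of families L H : 'I_r -> 'M[F]_n. *)

Section FlagDefs.
Variables (F : fieldType) (n r : nat).
Implicit Types (L H : 'I_r -> 'M[F]_n).

Definition is_flag_tuple L H : Prop :=
  forall i, [/\ \rank (L i) = 1%N, \rank (H i) = n.-1 & (L i <= H i)%MS].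

Definition gp_subtuple L H (S : {set 'I_r}) : Prop :=
  [/\ \rank (\sum_(i in S) L i)%MS = #|S|,
      \rank (\bigcap_(i in S) H i)%MS = (n - #|S|)%N,
      (forall i j, i \in S -> j \in S -> i != j -> \rank (L i :&: H j)%MS = 0%N) &
      \rank ((\sum_(i in S) L i) :&: (\bigcap_(i in S) H i))%MS = 0%N].

Definition general_position L H : Prop :=
  if (r <= n)%N then gp_subtuple L H setT
  else forall S : {set 'I_r}, #|S| = n -> gp_subtuple L H S.

Definition SL_equiv L H L' H' : Prop :=
  exists g : 'M[F]_n, \det g = 1 /\
    forall i, (L i *m g == L' i)%MS /\ (H i *m g == H' i)%MS.

Definition line_gen L (i : 'I_r) : 'rV[F]_n := nz_row (L i).
(* a linear form phi_i with kernel H_i: phi_i(u) = u *m (phi_i)^T, where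
   (phi_i)^T is a nonzero column of cokermx (H i) (so H i *m phi_i^T = 0) *)
Definition hyp_form H (i : 'I_r) : 'rV[F]_n := nz_row (cokermx (H i))^T.
Definition form_app (phi u : 'rV[F]_n) : F := (u *m phi^T) 0 0.

Definition s_sigma L H (s : 'S_r) : F :=
  \prod_(i < r) form_app (hyp_form H i) (line_gen L (s i)).

Definition derangement (s : 'S_r) : bool := [forall i, s i != i].

(* theta(x) = theta(y) in P^{!r-1}(F): the vectors (s_sigma)_{sigma derangement}
   are proportional by a nonzero scalar *)
Definition theta_eq L H L' H' : Prop :=
  exists c : F, c != 0 /\
    forall s : 'S_r, derangement s -> s_sigma L H s = c * s_sigma L' H' s.

End FlagDefs.

Section RealDefs.
Variables (R : realType) (n r : nat).

Definition complexify (A : 'M[R]_n) : 'M[R[i]]_n :=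
  map_mx (fun x : R => Complex x 0) A.

Definition in_U (L H : 'I_r -> 'M[R]_n) : Prop :=
  is_flag_tuple L H /\
  general_position (fun i => complexify (L i)) (fun i => complexify (H i)).

Definition theta_injective : Prop :=
  forall L H L' H' : 'I_r -> 'M[R]_n, in_U L H -> in_U L' H' ->
    theta_eq L H L' H' -> SL_equiv L H L' H'.

Definition theta_two_to_one : Prop :=
  forall L H : 'I_r -> 'M[R]_n, in_U L H ->
    exists L' H' : 'I_r -> 'M[R]_n,
      [/\ in_U L' H', theta_eq L' H' L H, ~ SL_equiv L' H' L H &
        forall L'' H'' : 'I_r -> 'M[R]_n, in_U L'' H'' -> theta_eq L'' H'' L H ->
          SL_equiv L'' H'' L H \/ SL_equiv L'' H'' L' H'].

End RealDefs.

(* The coordinates of theta are the derangement products s_sigma = prod_i A_(i, sigma i)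
   of the pairing matrix A_(i, j) = phi_i(v_j), whose diagonal vanishes and whose
   off-diagonal entries are nonzero in general position.  If two tuples have
   proportional coordinates, comparing derangements that differ by a transposition
   (for r = 3, the two 3-cycles) shows that A_(i, j) = b_i a_j A'_(i, j) off the
   diagonal.  Then the matrix sending v_k to a_k v'_k for k < min(n, r), and the
   intersection of the H_k (k < min(n, r)) to that of the H'_k, maps one tuple onto
   the other.  When r < n its determinant can be prescribed by rescaling a vector of
   that intersection; when n <= r the stabiliser of a tuple consists of scalars, so
   the determinant is determined up to an n-th power.  Hence the tuples are
   SL_n(R)-equivalent when n is odd or r < n, while for even n <= r the sign of the
   determinant splits every fibre into two orbits, exchanged by a reflection. *)

From HB Require Import structures.
From mathcomp Require Import all_boot all_order all_algebra all_fingroup.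
From mathcomp Require Import reals complex ring.
Set Implicit Arguments. Unset Strict Implicit. Unset Printing Implicit Defensive.
Import Order.TTheory GRing.Theory Num.Theory.
Local Open Scope ring_scope.

(** * Derangements *)

Lemma next_neq (T : eqType) (p : seq T) x :
  uniq p -> (1 < size p)%N -> x \in p -> next p x != x.
Proof.
move=> Up sz xp; case: (rot_to xp) => i [|y q] rot_p.
  by move: sz; rewrite -(size_rot i) rot_p.
rewrite -(next_rot i Up) rot_p /= eqxx.
by move: Up; rewrite -(rot_uniq i) rot_p /= inE negb_or eq_sym => /andP[/andP[]].
Qed.

Lemma exists_notin (T : finType) (s : seq T) : (size s < #|T|)%N ->
  exists x : T, x \notin s.
Proof.
move=> lt_s; apply/existsP; rewrite -negb_forall; apply/negP => /forallP all_s.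
suff : (#|T| <= size s)%N by rewrite leqNgt lt_s.
apply: leq_trans (card_size s); apply: subset_leq_card.
by apply/subsetP => x _; exact: all_s.
Qed.

Definition cycle_perm (T : finType) (p : seq T) (Up : uniq p) : {perm T} :=
  perm (can_inj (prev_next Up)).

Lemma cycle_permE (T : finType) (p : seq T) (Up : uniq p) x : cycle_perm Up x = next p x.
Proof. by rewrite permE. Qed.

Lemma derangement_cycle_perm r (p : seq 'I_r) (Up : uniq p) :
  (1 < size p)%N -> (forall x, x \in p) -> derangement (cycle_perm Up).
Proof. by move=> sz p_all; apply/forallP => x; rewrite cycle_permE next_neq. Qed.

Section OffDiagonalRankOne.
Variables (F : fieldType) (r : nat) (Q : 'I_r -> 'I_r -> F) (c : F).
Hypothesis Q_neq0 : forall i j : 'I_r, i != j -> Q i j != 0.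
Hypothesis Q_derangement : forall s : 'S_r, derangement s -> \prod_i Q i (s i) = c.

Lemma Q_swap (s : 'S_r) (a k : 'I_r) : derangement s -> a != k -> s a != k -> s k != a ->
  Q a (s a) * Q k (s k) = Q a (s k) * Q k (s a).
Proof.
move=> ds ak sak ska; set s' := (tperm a k * s)%g.
have s'E x : s' x = s (tperm a k x) by rewrite permM.
have ds' : derangement s'.
  apply/forallP => x; rewrite s'E; case: tpermP => [->|->|xa xk] //.
  by move/forallP: ds => /(_ x).
have := Q_derangement ds; rewrite -(Q_derangement ds') (bigD1 a) //= (bigD1 k) 1?eq_sym //=.
rewrite [in RHS](bigD1 a) //= [in RHS](bigD1 k) 1?eq_sym //= !s'E tpermL tpermR.
set P := (X in _ * (_ * X) = _); rewrite [in RHS](eq_bigr (fun i => Q i (s i))); last first.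
  by move=> i /andP[ia ik]; rewrite s'E tpermD // eq_sym.
have P_neq0 : P != 0.
  rewrite prodf_seq_neq0; apply/allP => i _; apply/implyP => _.
  by apply: Q_neq0; rewrite eq_sym; move/forallP: ds => /(_ i).
by rewrite !mulrA => /(mulIf P_neq0).
Qed.

(* Q_swap applied to a cyclic permutation of 'I_r that starts a -> b, c' -> d. *)
Lemma Q_cross (a b c' d : 'I_r) : uniq [:: a; b; c'; d] -> Q a b * Q c' d = Q a d * Q c' b.
Proof.
move=> U4; set p := [:: a; b; c'; d] ++ [seq x <- enum 'I_r | x \notin [:: a; b; c'; d]].
have Up : uniq p.
  rewrite cat_uniq U4 filter_uniq ?enum_uniq // andbT.
  by apply/hasPn => x; rewrite mem_filter => /andP[].
have p_all x : x \in p by rewrite mem_cat mem_filter mem_enum andbT orbN.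
have ds := derangement_cycle_perm Up (isT : (1 < size p)%N) p_all.
move: U4 => /=; rewrite !inE !negb_or -!andbA => /and4P[ab ac ad /and4P[bc bd _ cd]].
have sa : cycle_perm Up a = b by rewrite cycle_permE /p /next /= eqxx.
have sc : cycle_perm Up c' = d.
  by rewrite cycle_permE /p /next /= (eq_sym c' a) (negbTE ac) (eq_sym c' b) (negbTE bc) eqxx.
by have := Q_swap ds ac; rewrite sa sc; apply; rewrite // eq_sym.
Qed.

Lemma Q_cycle3 (x y z : 'I_r) : (forall w, w \in [:: x; y; z]) -> uniq [:: x; y; z] ->
  Q x y * Q y z * Q z x = Q x z * Q z y * Q y x.
Proof.
move=> all3 U3; move: (U3) => /=; rewrite !inE !negb_or => /andP[/andP[xy xz] /andP[yz _]].
have U3' : uniq [:: x; z; y] by rewrite /= !inE !negb_or xz xy eq_sym yz.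
have all3' w : w \in [:: x; z; y] by have := all3 w; rewrite !inE orbCA orbC -orbA.
have prodE (s : 'S_r) : \prod_i Q i (s i) = Q x (s x) * Q y (s y) * Q z (s z).
  rewrite (bigD1 x) //= (bigD1 y) 1?eq_sym //= (bigD1 z) /=; last by rewrite eq_sym xz eq_sym yz.
  rewrite big_pred0 ?mulr1 ?mulrA // => w.
  by have := all3 w; rewrite !inE; case: (w == x); case: (w == y); case: (w == z).
have := Q_derangement (derangement_cycle_perm U3 isT all3).
rewrite -(Q_derangement (derangement_cycle_perm U3' isT all3')) !prodE !cycle_permE /next /=.
rewrite !eqxx (eq_sym y x) (negbTE xy) (eq_sym z x) (negbTE xz) (eq_sym z y) (negbTE yz).
by move=> ->; ring.
Qed.

Section Normalised.
Variable o : 'I_r.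

(* Q i j = b i * a j forces this ratio to be the constant b o * a o. *)
Definition Q_ratio (i j : 'I_r) := Q i o * Q o j / Q i j.

Lemma Q_ratio_row (i j l : 'I_r) : i != o -> j != o -> l != o -> i != j -> i != l ->
  Q_ratio i j = Q_ratio i l.
Proof.
move=> io jo lo ij il; have [/eqP <-|jl] := boolP (j == l); first by [].
have := @Q_cross o j i l; rewrite /= !inE !negb_or !(eq_sym o) (eq_sym j i) io jo lo ij jl il.
move=> /(_ isT) cross; apply/eqP; rewrite /Q_ratio eqr_div ?Q_neq0 //.
by apply/eqP; rewrite -mulrA cross; ring.
Qed.

Lemma Q_ratio_col (i k j : 'I_r) : i != o -> k != o -> j != o -> i != j -> k != j ->
  Q_ratio i j = Q_ratio k j.
Proof.
move=> io ko jo ij kj; have [/eqP <-|ik] := boolP (i == k); first by [].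
have := @Q_cross i o k j; rewrite /= !inE !negb_or !(eq_sym o) io ko jo ij kj ik.
move=> /(_ isT) cross; apply/eqP; rewrite /Q_ratio eqr_div ?Q_neq0 //.
by apply/eqP; rewrite mulrAC cross; ring.
Qed.

Lemma Q_ratio_sym (i j : 'I_r) : i != o -> j != o -> i != j -> Q_ratio i j = Q_ratio j i.
Proof.
move=> io jo ij; have ji : j != i by rewrite eq_sym.
have [all3|] := boolP [forall w, w \in [:: o; i; j]].
  have := @Q_cycle3 o i j (fun w => forallP all3 w).
  rewrite /= !inE !negb_or !(eq_sym o) io jo ij => /(_ isT) cyc.
  apply/eqP; rewrite /Q_ratio eqr_div ?Q_neq0 //; apply/eqP.
  by transitivity (Q o j * Q j i * Q i o); [ring | rewrite -cyc; ring].
case/forallPn => m; rewrite !inE !negb_or => /andP[mo /andP[mi mj]].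
by rewrite (Q_ratio_col io mo jo ij mj) (Q_ratio_row mo jo io mj mi) (Q_ratio_col mo jo io mi ji).
Qed.

Lemma Q_ratio_const (i j k l : 'I_r) : i != o -> j != o -> k != o -> l != o -> i != j -> k != l ->
  Q_ratio i j = Q_ratio k l.
Proof.
move=> io jo ko lo ij kl; have [/eqP il|il] := boolP (i == l).
  have ji : j != i by rewrite eq_sym.
  by rewrite -il in kl lo *; rewrite (Q_ratio_sym io jo ij) (Q_ratio_col jo ko io ji kl).
by rewrite (Q_ratio_row io jo lo ij il) (Q_ratio_col io ko lo il kl).
Qed.

End Normalised.

Lemma offdiag_rank1 : (3 <= r)%N ->
  exists a b : 'I_r -> F, forall i j, i != j -> Q i j = b i * a j.
Proof.
rewrite -{1}(card_ord r) => r3.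
have [o _] := @exists_notin _ [::] (ltnW (ltnW r3)).
have [p po] := @exists_notin _ [:: o] (ltnW r3).
have [q] := @exists_notin _ [:: o; p] r3.
rewrite !inE !negb_or => /andP[qo qp]; rewrite inE in po.
set k := Q_ratio o p q.
have k_neq0 : k != 0 by rewrite !mulf_neq0 ?invr_eq0 ?Q_neq0 // 1?eq_sym // eq_sym.
exists (fun j => if j == o then k else Q o j).
exists (fun i => if i == o then 1 else Q i o / k).
move=> i j ij /=; have [io|io] := eqVneq i o.
  by subst i; rewrite eq_sym (negbTE ij) mul1r.
have [->|jo] := eqVneq j o; first by rewrite divfK.
rewrite /k -(Q_ratio_const io jo po qo ij) 1?eq_sym // /Q_ratio.
by field; rewrite !Q_neq0 // eq_sym.
Qed.

End OffDiagonalRankOne.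

(** * Flags, their pairing, and linear transport *)

Section Flags.
Variables (F : fieldType) (n : nat).

Lemma rank1_sub_rV (K : 'M[F]_n) (v : 'rV[F]_n) :
  \rank K = 1%N -> (v <= K)%MS -> v != 0 -> (K <= v)%MS.
Proof.
move=> rK vK v_neq0; have := mxrank_leqif_eq vK.
by rewrite rank_rV v_neq0 rK => /leqif_refl/andP[_].
Qed.

Lemma rank1_proportional (K : 'M[F]_n) (u v : 'rV[F]_n) : \rank K = 1%N ->
  (u <= K)%MS -> (v <= K)%MS -> v != 0 -> exists a, u = a *: v.
Proof. by move=> rK uK vK v_neq0; apply/sub_rVP/(submx_trans uK)/rank1_sub_rV. Qed.

Lemma mx11_eq0 (M : 'M[F]_1) : (M == 0) = (M 0 0 == 0).
Proof.
apply/eqP/eqP => [->|M00]; first by rewrite mxE.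
by rewrite [M]mx11_scalar M00; apply/matrixP => i j; rewrite !mxE; case: (i == j).
Qed.

Lemma sub_mulmx_unit m (X : 'M[F]_(m, n)) (Y M : 'M[F]_n) : M \in unitmx ->
  (X <= Y *m M)%MS = (X *m invmx M <= Y)%MS.
Proof.
move=> uM; apply/idP/idP => [|sub]; first by rewrite -{2}[Y](mulmxK uM); apply: submxMr.
by rewrite -[X](mulmxKV uM); apply: submxMr.
Qed.

Lemma capmxMr_unit (A B M : 'M[F]_n) : M \in unitmx ->
  ((A :&: B) *m M :=: A *m M :&: B *m M)%MS.
Proof.
move=> uM; apply/eqmxP/andP; split; first exact: capmxMr.
by rewrite sub_mulmx_unit // sub_capmx -!sub_mulmx_unit // capmxSl capmxSr.
Qed.

Lemma bigcapmxMr_unit (I : finType) (P : pred I) (A : I -> 'M[F]_n) (M : 'M[F]_n) :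
  M \in unitmx -> ((\bigcap_(i | P i) A i) *m M :=: \bigcap_(i | P i) (A i *m M))%MS.
Proof.
move=> uM; apply/eqmxP.
apply: (big_ind2 (fun (X Y : 'M[F]_n) => (X *m M == Y)%MS)) => [|X1 X2 Y1 Y2 /eqmxP e1 /eqmxP e2|i _].
- by rewrite mul1mx submx1 sub1mx row_full_unit.
- by apply/eqmxP/(eqmx_trans (capmxMr_unit _ _ uM))/cap_eqmx.
- exact/eqmxP/eqmx_refl.
Qed.

Variable r : nat.
Implicit Types (L H : 'I_r -> 'M[F]_n) (S : {set 'I_r}).

Definition flag_pairing L H (i j : 'I_r) : F := form_app (hyp_form H i) (line_gen L j).

Lemma s_sigmaE L H s : s_sigma L H s = \prod_i flag_pairing L H i (s i).
Proof. by []. Qed.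

Lemma line_gen_sub L i : (line_gen L i <= L i)%MS.
Proof. exact: nz_row_sub. Qed.

Lemma line_gen_neq0 L i : \rank (L i) = 1%N -> line_gen L i != 0.
Proof. by move=> rL; rewrite nz_row_eq0 -mxrank_eq0 rL. Qed.

Lemma line_gen_span L i : \rank (L i) = 1%N -> (L i <= line_gen L i)%MS.
Proof. by move=> rL; rewrite rank1_sub_rV ?line_gen_sub ?line_gen_neq0. Qed.

Lemma hyp_form_ker H i : H i *m (hyp_form H i)^T = 0.
Proof.
rewrite /hyp_form; case/submxP: (nz_row_sub (cokermx (H i))^T) => D ->.
by rewrite trmx_mul trmxK mulmxA mulmx_coker mul0mx.
Qed.

Lemma hyp_form_neq0 H i : (0 < n)%N -> \rank (H i) = n.-1 -> hyp_form H i != 0.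
Proof.
move=> n_gt0 rH; rewrite nz_row_eq0 -mxrank_eq0 mxrank_tr mxrank_coker rH.
by rewrite -subn1 subKn.
Qed.

Lemma sub_hypE H i m (X : 'M[F]_(m, n)) : (0 < n)%N -> \rank (H i) = n.-1 ->
  (X <= H i)%MS = (X *m (hyp_form H i)^T == 0).
Proof.
move=> n_gt0 rH; apply/idP/idP => [/submxP[D ->]|].
  by rewrite -mulmxA hyp_form_ker mulmx0.
rewrite -sub_kermx => /submx_trans; apply.
have HK : (H i <= kermx (hyp_form H i)^T)%MS by rewrite sub_kermx hyp_form_ker.
have := mxrank_leqif_eq HK; rewrite mxrank_ker mxrank_tr rank_rV hyp_form_neq0 // rH subn1.
by move=> /leqif_refl/andP[_].
Qed.

Lemma hyp_form_proportional H i (psi : 'rV[F]_n) : (0 < n)%N -> \rank (H i) = n.-1 ->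
  H i *m psi^T = 0 -> exists b, psi = b *: hyp_form H i.
Proof.
move=> n_gt0 rH Hpsi.
have rK : \rank (kermx (H i)^T) = 1%N by rewrite mxrank_ker mxrank_tr rH -subn1 subKn.
have inK (u : 'rV[F]_n) : H i *m u^T = 0 -> (u <= kermx (H i)^T)%MS.
  by move=> Hu; rewrite sub_kermx -[u *m _]trmxK trmx_mul trmxK Hu trmx0.
exact: rank1_proportional rK (inK _ Hpsi) (inK _ (hyp_form_ker H i)) (hyp_form_neq0 n_gt0 rH).
Qed.

Lemma line_gen_form L H i j : line_gen L j *m (hyp_form H i)^T = (flag_pairing L H i j)%:M.
Proof. exact: mx11_scalar. Qed.

Lemma line_gen_sub_hypE L H i j : (0 < n)%N -> \rank (H i) = n.-1 ->
  (line_gen L j <= H i)%MS = (flag_pairing L H i j == 0).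
Proof. by move=> n_gt0 rH; rewrite sub_hypE // mx11_eq0. Qed.

Lemma flag_pairing_diag L H i : (0 < n)%N -> is_flag_tuple L H -> flag_pairing L H i i = 0.
Proof.
move=> n_gt0 fl; have [_ rH LH] := fl i; apply/eqP.
by rewrite -line_gen_sub_hypE //; apply: submx_trans (line_gen_sub L i) LH.
Qed.

Lemma gp_subtupleMr L H S (M : 'M[F]_n) : M \in unitmx -> gp_subtuple L H S ->
  gp_subtuple (fun i => L i *m M) (fun i => H i *m M) S.
Proof.
move=> uM [rL rH LH0 LH0'].
have rM m (A : 'M_(m, n)) : \rank (A *m M) = \rank A by rewrite mxrankMfree ?row_free_unit.
split=> [||i j iS jS ij|].
- by rewrite -(sumsmxMr _ _ M) rM.
- by rewrite -(bigcapmxMr_unit _ _ uM) rM.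
- by rewrite -(capmxMr_unit _ _ uM) rM LH0.
- by rewrite -(cap_eqmx (sumsmxMr _ _ M) (bigcapmxMr_unit _ H uM)) -(capmxMr_unit _ _ uM) rM.
Qed.

Lemma general_positionMr L H (M : 'M[F]_n) : M \in unitmx -> general_position L H ->
  general_position (fun i => L i *m M) (fun i => H i *m M).
Proof.
rewrite /general_position => uM; case: ifP => _; first exact: gp_subtupleMr.
by move=> gp S cardS; apply: gp_subtupleMr; last exact: gp.
Qed.

Lemma is_flag_tupleMr L H (M : 'M[F]_n) : M \in unitmx -> is_flag_tuple L H ->
  is_flag_tuple (fun i => L i *m M) (fun i => H i *m M).
Proof.
move=> uM fl i; have [rL rH LH] := fl i.
by split; rewrite ?mxrankMfree ?row_free_unit ?submxMr.
Qed.

End Flags.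

Section Transport.
Variables (F : fieldType) (n r : nat).
Implicit Types (L H : 'I_r -> 'M[F]_n).

Definition transports L H L' H' (g : 'M[F]_n) :=
  forall i, (L i *m g == L' i)%MS /\ (H i *m g == H' i)%MS.

Lemma transports_mulmx L H M : transports L H (fun i => L i *m M) (fun i => H i *m M) M.
Proof. by move=> i; split; apply/eqmxP/eqmx_refl. Qed.

Lemma transportsM L H L' H' L'' H'' g h :
  transports L H L' H' g -> transports L' H' L'' H'' h -> transports L H L'' H'' (g *m h).
Proof.
move=> tg th i; have [/eqmxP gL /eqmxP gH] := tg i; have [/eqmxP hL /eqmxP hH] := th i.
rewrite !mulmxA; split; apply/eqmxP.
  exact: eqmx_trans (eqmxMr h gL) hL.
exact: eqmx_trans (eqmxMr h gH) hH.
Qed.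

Lemma transportsZ L H L' H' g t :
  t != 0 -> transports L H L' H' g -> transports L H L' H' (t *: g).
Proof.
move=> t_neq0 tr i; have [/eqmxP eL /eqmxP eH] := tr i.
rewrite -!scalemxAr; split; apply/eqmxP.
  exact: eqmx_trans (eqmx_scale _ t_neq0) eL.
exact: eqmx_trans (eqmx_scale _ t_neq0) eH.
Qed.

Lemma theta_eq_scaled L H L' H' (a b : 'I_r -> F) :
  (forall j, a j != 0) -> (forall i, b i != 0) ->
  (forall i j, i != j -> flag_pairing L H i j = b i * a j * flag_pairing L' H' i j) ->
  theta_eq L H L' H'.
Proof.
move=> a_neq0 b_neq0 scaled; exists ((\prod_i b i) * \prod_i a i); split.
  by rewrite mulf_neq0 //; apply/prodf_neq0 => i _.
move=> s ds; rewrite !s_sigmaE.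
rewrite (eq_bigr (fun i => b i * a (s i) * flag_pairing L' H' i (s i))); last first.
  by move=> i _; apply: scaled; rewrite eq_sym; move/forallP: ds => /(_ i).
rewrite !big_split /=; congr (_ * _ * _).
by rewrite [RHS](reindex_inj (@perm_inj _ s)).
Qed.

Lemma line_gen_transport L L' g i : \rank (L i) = 1%N -> \rank (L' i) = 1%N ->
  g \in unitmx -> (L i *m g <= L' i)%MS ->
  exists2 a, a != 0 & line_gen L i *m g = a *: line_gen L' i.
Proof.
move=> rL rL' ug sub.
have vg : (line_gen L i *m g <= L' i)%MS := submx_trans (submxMr g (line_gen_sub L i)) sub.
have [a Ea] := rank1_proportional rL' vg (line_gen_sub L' i) (line_gen_neq0 rL').
exists a => //; apply: contraNneq (line_gen_neq0 rL) => a0; apply/eqP.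
by rewrite -[line_gen L i](mulmxK ug) Ea a0 scale0r mul0mx.
Qed.

Lemma hyp_form_transport H H' g i : (0 < n)%N -> \rank (H i) = n.-1 -> \rank (H' i) = n.-1 ->
  g \in unitmx -> (H i *m g <= H' i)%MS ->
  exists2 b, b != 0 & hyp_form H' i *m g^T = b *: hyp_form H i.
Proof.
move=> n_gt0 rH rH' ug sub.
have : H i *m (hyp_form H' i *m g^T)^T = 0.
  by rewrite trmx_mul trmxK mulmxA; apply/eqP; rewrite -sub_hypE.
case/(hyp_form_proportional n_gt0 rH) => b Eb; exists b => //.
have ugT : g^T \in unitmx by rewrite unitmx_tr.
apply: contraNneq (hyp_form_neq0 n_gt0 rH') => b0; apply/eqP.
by rewrite -[hyp_form H' i](mulmxK ugT) Eb b0 scale0r mul0mx.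
Qed.

Lemma transport_scalings L H L' H' g : (0 < n)%N -> is_flag_tuple L H -> is_flag_tuple L' H' ->
  g \in unitmx -> transports L H L' H' g ->
  exists a b : 'I_r -> F, [/\ forall j, a j != 0, forall i, b i != 0,
    forall j, line_gen L j *m g = a j *: line_gen L' j &
    forall i j, b i * flag_pairing L H i j = a j * flag_pairing L' H' i j].
Proof.
move=> n_gt0 fl fl' ug tr.
have /fin_all_exists2[a a_neq0 Ea] j :
    exists2 a, a != 0 & line_gen L j *m g = a *: line_gen L' j.
  have [rL _ _] := fl j; have [rL' _ _] := fl' j; have [/andP[Lg _] _] := tr j.
  exact: line_gen_transport.
have /fin_all_exists2[b b_neq0 Eb] i :
    exists2 b, b != 0 & hyp_form H' i *m g^T = b *: hyp_form H i.
  have [_ rH _] := fl i; have [_ rH' _] := fl' i; have [_ /andP[Hg _]] := tr i.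
  exact: hyp_form_transport.
exists a, b; split=> // i j.
have : line_gen L j *m g *m (hyp_form H' i)^T = line_gen L j *m (hyp_form H' i *m g^T)^T.
  by rewrite trmx_mul trmxK mulmxA.
rewrite Ea Eb linearZ /= -scalemxAl -scalemxAr !line_gen_form !scale_scalar_mx.
by move/(congr1 (fun M : 'M_1 => M 0 0)); rewrite !mxE eqxx !mulr1n => ->.
Qed.

Lemma theta_eq_transport L H L' H' g : (0 < n)%N -> is_flag_tuple L H -> is_flag_tuple L' H' ->
  g \in unitmx -> transports L H L' H' g -> theta_eq L' H' L H.
Proof.
move=> n_gt0 fl fl' ug tr.
have [a [b [a_neq0 b_neq0 _ scaled]]] := transport_scalings n_gt0 fl fl' ug tr.
apply: (@theta_eq_scaled _ _ _ _ (fun j => (a j)^-1) b) => // [j|i j _].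
  by rewrite invr_eq0.
by apply: (mulfI (a_neq0 j)); rewrite -scaled; field.
Qed.

End Transport.

(** * Real tuples whose complexification is in general position *)

Section MapMx.
Variables (aF rF : fieldType) (f : {rmorphism aF -> rF}) (n : nat).
Local Notation "A ^f" := (map_mx f A) : ring_scope.

Lemma map_sumsmx (I : finType) (P : pred I) (A : I -> 'M[aF]_n) :
  (((\sum_(i | P i) A i)%MS)^f :=: \sum_(i | P i) (A i)^f)%MS.
Proof.
apply/eqmxP; apply: (big_ind2 (fun (X : 'M_n) (Y : 'M_n) => (X^f == Y)%MS)).
- by rewrite map_mx0; apply/eqmxP/eqmx_refl.
- move=> X1 Y1 X2 Y2 /eqmxP e1 /eqmxP e2.
  by apply/eqmxP; apply: eqmx_trans (map_addsmx f X1 X2) (adds_eqmx e1 e2).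
- by move=> i _; apply/eqmxP/eqmx_refl.
Qed.

Lemma map_bigcapmx (I : finType) (P : pred I) (A : I -> 'M[aF]_n) :
  (((\bigcap_(i | P i) A i)%MS)^f :=: \bigcap_(i | P i) (A i)^f)%MS.
Proof.
apply/eqmxP; apply: (big_ind2 (fun (X : 'M_n) (Y : 'M_n) => (X^f == Y)%MS)).
- by rewrite map_mx1; apply/eqmxP/eqmx_refl.
- move=> X1 Y1 X2 Y2 /eqmxP e1 /eqmxP e2.
  by apply/eqmxP; apply: eqmx_trans (map_capmx f X1 X2) (cap_eqmx e1 e2).
- by move=> i _; apply/eqmxP/eqmx_refl.
Qed.

Lemma gp_subtuple_map r (L H : 'I_r -> 'M[aF]_n) S :
  gp_subtuple (fun i => (L i)^f) (fun i => (H i)^f) S -> gp_subtuple L H S.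
Proof.
case=> rL rH LH0 LH0'; split=> [||i j iS jS ij|].
- by rewrite -(mxrank_map f) (map_sumsmx _ L).
- by rewrite -(mxrank_map f) (map_bigcapmx _ H).
- by rewrite -(mxrank_map f) (map_capmx f) LH0.
- by rewrite -(mxrank_map f) (map_capmx f) (cap_eqmx (map_sumsmx _ L) (map_bigcapmx _ H)).
Qed.

End MapMx.

Section RealTuples.
Variables (R : realType) (n r : nat).
Implicit Types (L H : 'I_r -> 'M[R]_n) (S : {set 'I_r}).

Lemma in_U_mulmx L H (M : 'M[R]_n) : M \in unitmx -> in_U L H ->
  in_U (fun i => L i *m M) (fun i => H i *m M).
Proof.
move=> uM [fl gp]; split; first exact: is_flag_tupleMr.
have complexifyM (A : 'M[R]_n) : complexify (A *m M) = complexify A *m complexify M.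
  exact: (map_mxM (real_complex R) A M).
rewrite (boolp.funext (fun i => complexifyM (L i))) (boolp.funext (fun i => complexifyM (H i))).
by apply: general_positionMr gp; rewrite (map_unitmx (real_complex R)).
Qed.

Lemma in_U_gp_subtuple L H S : in_U L H -> #|S| = minn n r -> gp_subtuple L H S.
Proof.
case=> _ + cardS; rewrite /general_position => gp.
apply: (@gp_subtuple_map _ _ (real_complex R)); move: gp; case: ifP => [rn|/negbT].
  suff -> : S = setT by exact: id.
  by apply/eqP; rewrite eqEcard subsetT cardS cardsT card_ord leq_min rn leqnn.
by rewrite -ltnNge => nr; apply; rewrite cardS (minn_idPl (ltnW nr)).
Qed.

End RealTuples.

Lemma card_set_ord_lt r m : (m <= r)%N -> #|[set k : 'I_r | (k < m)%N]| = m.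
Proof.
move=> m_le_r; have -> : [set k : 'I_r | (k < m)%N] = widen_ord m_le_r @: 'I_m.
  apply/setP => k; rewrite inE; apply/idP/imsetP => [km|[x _ ->]]; last by rewrite /= ltn_ord.
  by exists (Ordinal km) => //; apply: val_inj.
by rewrite card_imset ?card_ord // => x y /(congr1 val) /= /val_inj.
Qed.

Lemma exists_superset_card (T : finType) (A : {set T}) k :
  (#|A| <= k)%N -> (k <= #|T|)%N -> exists2 S : {set T}, A \subset S & #|S| = k.
Proof.
elim: k => [|k IH] Ak kT; first by exists A; last by apply/eqP; rewrite -leqn0.
have [<-|neAk] := eqVneq #|A| k.+1; first by exists A.
have [|S AS cardS] := IH _ (ltnW kT); first by rewrite -ltnS ltn_neqAle neAk.
have : (0 < #|~: S|)%N by rewrite -(ltn_add2l #|S|) addn0 cardsC cardS.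
case/card_gt0P => x; rewrite inE => xS; exists (x |: S).
  exact: subset_trans AS (subsetUr _ _).
by rewrite cardsU1 xS cardS.
Qed.

Section InU.
Variables (R : realType) (n r : nat).
Hypothesis n_ge2 : (2 <= n)%N.
Implicit Types (L H : 'I_r -> 'M[R]_n).

Lemma in_U_cap0 L H i j : in_U L H -> i != j -> \rank (L i :&: H j)%MS = 0%N.
Proof.
move=> U ij; have r_ge2 : (2 <= r)%N by have := max_card [set i; j]; rewrite cards2 ij card_ord.
have card_ij : (#|[set i; j]| <= minn n r)%N by rewrite cards2 ij leq_min n_ge2 r_ge2.
have [|S ijS cardS] := exists_superset_card card_ij; first by rewrite card_ord geq_minr.
have [_ _ LH0 _] := in_U_gp_subtuple U cardS.
by apply: LH0 ij; apply: (subsetP ijS); rewrite !inE eqxx ?orbT.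
Qed.

Lemma flag_pairing_neq0 L H i j : in_U L H -> i != j -> flag_pairing L H i j != 0.
Proof.
move=> U ij; have [fl _] := U; have [rLj _ _] := fl j; have [_ rHi _] := fl i.
rewrite -line_gen_sub_hypE ?(ltnW n_ge2) //.
apply: contraTN (line_gen_neq0 rLj) => LH; rewrite negbK -submx0.
have : \rank (L j :&: H i)%MS == 0%N by rewrite in_U_cap0 // eq_sym.
by rewrite mxrank_eq0 => /eqP <-; rewrite sub_capmx line_gen_sub.
Qed.

Lemma theta_eq_scaling L H L' H' : (3 <= r)%N -> in_U L H -> in_U L' H' ->
  theta_eq L H L' H' ->
  exists a b : 'I_r -> R, [/\ forall j, a j != 0, forall i, b i != 0 &
    forall i j, i != j -> flag_pairing L H i j = b i * a j * flag_pairing L' H' i j].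
Proof.
move=> r_ge3 U U' [c [c_neq0 th]].
pose Q i j := flag_pairing L H i j / flag_pairing L' H' i j.
have Q_neq0 i j : i != j -> Q i j != 0.
  by move=> ij; rewrite mulf_neq0 ?invr_eq0 ?flag_pairing_neq0.
have Q_derangement (s : 'S_r) : derangement s -> \prod_i Q i (s i) = c.
  move=> ds; rewrite prodf_div -!s_sigmaE th // mulfK // s_sigmaE.
  by apply/prodf_neq0 => i _; rewrite flag_pairing_neq0 // eq_sym; move/forallP: ds.
have [a [b ab]] := offdiag_rank1 Q_neq0 Q_derangement r_ge3.
have other k : exists2 l : 'I_r, l != k & k != l.
  have [|l] := @exists_notin _ [:: k]; first by rewrite card_ord ltnW.
  by rewrite inE => lk; exists l; rewrite // eq_sym.
have ab_neq0 i j : i != j -> (b i != 0) && (a j != 0).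
  by move=> ij; rewrite -negb_or -mulf_eq0 -ab ?Q_neq0.
exists a, b; split=> [j|i|i j ij].
- by have [i ij _] := other j; case/andP: (ab_neq0 i j ij).
- by have [j _ ij] := other i; case/andP: (ab_neq0 i j ij).
- by rewrite -ab // /Q divfK // flag_pairing_neq0.
Qed.

End InU.

(** * A matrix carrying one tuple onto another *)

Section Construction.
Variables (F : fieldType) (n' r' : nat).
Local Notation n := n'.+1.
Local Notation r := r'.+1.
Local Notation m := (minn n r).
Implicit Types (L H : 'I_r -> 'M[F]_n).

Definition init_set : {set 'I_r} := [set k : 'I_r | (k < m)%N].

Lemma card_init_set : #|init_set| = m.
Proof. by rewrite card_set_ord_lt // geq_minr. Qed.

Definition cap_space H : 'M[F]_n := (\bigcap_(k in init_set) H k)%MS.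

Lemma cap_space_sub H i : i \in init_set -> (cap_space H <= H i)%MS.
Proof. by move=> iS; rewrite /cap_space (bigD1 i) //= capmxSl. Qed.

Definition cap_row H (j : nat) : 'rV[F]_n :=
  if (insub j : option 'I_(\rank (cap_space H))) is Some j'
  then row j' (row_base (cap_space H)) else 0.

(* Rows: the lines v_k for k < m, then a basis of the intersection of the H_k, k < m
   (cap_row is 0 past the dimension of that intersection; general position excludes this). *)
Definition adapted_basis L H : 'M[F]_n :=
  \matrix_(k < n) if (k < m)%N then line_gen L (inord k) else cap_row H (k - m).

Lemma adapted_basis_row_lt L H (k : 'I_n) : (k < m)%N ->
  row k (adapted_basis L H) = line_gen L (inord k).
Proof. by move=> km; rewrite rowK km. Qed.

Lemma adapted_basis_row_ge L H (k : 'I_n) : (m <= k)%N ->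
  (row k (adapted_basis L H) <= cap_space H)%MS.
Proof.
rewrite leqNgt => /negbTE mk; rewrite rowK mk /cap_row; case: insubP => [j _ _|_].
  by rewrite (submx_trans (row_sub _ _)) ?eq_row_base.
exact: sub0mx.
Qed.

Lemma adapted_basis_unit L H : is_flag_tuple L H -> gp_subtuple L H init_set ->
  adapted_basis L H \in unitmx.
Proof.
move=> fl [rV rW _ VW0]; set V := (\sum_(k in init_set) L k)%MS; set W := cap_space H.
have m_le_n : (m <= n)%N := geq_minl n r.
have VB : (V <= adapted_basis L H)%MS.
  apply/sumsmx_subP => k; rewrite inE => km; have [rL _ _] := fl k.
  apply: submx_trans (line_gen_span rL) _.
  have := @adapted_basis_row_lt L H (Ordinal (leq_trans km m_le_n)) km.
  by rewrite /= inord_val => <-; exact: row_sub.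
have WB : (W <= adapted_basis L H)%MS.
  rewrite -(eq_row_base W); apply/row_subP => j.
  have jn : (m + j < n)%N by rewrite -ltn_subRL -card_init_set -rW ltn_ord.
  suff -> : row j (row_base W) = row (Ordinal jn) (adapted_basis L H) by exact: row_sub.
  rewrite rowK /= ltnNge leq_addr /= addKn /cap_row.
  by case: insubP => [j' _ /val_inj ->|]; rewrite ?ltn_ord.
rewrite -row_full_unit -sub1mx (submx_trans _ (_ : V + W <= _)%MS) ?addsmx_sub ?VB //.
have := mxrank_sum_cap V W; rewrite rV rW VW0 addn0 card_init_set subnKC //.
by rewrite sub1mx /row_full => ->.
Qed.

Definition scaling_row (a : 'I_r -> F) (e : F) : 'rV[F]_n :=
  \row_(k < n) if (k < m)%N then a (inord k) else if k == ord_max then e else 1.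

(* Sends v_k to a_k v'_k for k < m and the intersection of the H_k to that of the H'_k;
   the weight e on the last basis vector only matters when r < n. *)
Definition transporter L H L' H' a e : 'M[F]_n :=
  invmx (adapted_basis L H) *m diag_mx (scaling_row a e) *m adapted_basis L' H'.

Lemma det_transporter L H L' H' a e : \det (transporter L H L' H' a e) =
  (\det (adapted_basis L H))^-1 * (\prod_k scaling_row a e 0 k) * \det (adapted_basis L' H').
Proof. by rewrite !det_mulmx det_inv det_diag. Qed.

Lemma det_transporter_scale L H L' H' a e : (r < n)%N ->
  \det (transporter L H L' H' a e) = e * \det (transporter L H L' H' a 1).
Proof.
move=> rn; have mr : m = r by apply/minn_idPr/ltnW.
rewrite !det_transporter (bigD1 ord_max) // [in RHS](bigD1 ord_max) //= !mxE mr.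
rewrite ltnNge -ltnS rn /= eqxx mul1r !mulrA [e * _]mulrC; congr (_ * _ * _).
by apply: eq_bigr => k kn; rewrite !mxE (negbTE kn).
Qed.

Section Transporter.
Variables (L H L' H' : 'I_r -> 'M[F]_n) (a b : 'I_r -> F) (e : F).
Hypotheses (fl : is_flag_tuple L H) (fl' : is_flag_tuple L' H').
Hypotheses (gp : gp_subtuple L H init_set) (gp' : gp_subtuple L' H' init_set).
Hypotheses (a_neq0 : forall j, a j != 0) (b_neq0 : forall i, b i != 0) (e_neq0 : e != 0).
Hypothesis scaled :
  forall i j, i != j -> flag_pairing L H i j = b i * a j * flag_pairing L' H' i j.

Local Notation g := (transporter L H L' H' a e).
Let uB : adapted_basis L H \in unitmx := adapted_basis_unit fl gp.
Let uB' : adapted_basis L' H' \in unitmx := adapted_basis_unit fl' gp'.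

Lemma row_transporter (k : 'I_n) :
  row k (adapted_basis L H *m g) = scaling_row a e 0 k *: row k (adapted_basis L' H').
Proof.
rewrite /transporter !mulmxA mulmxV // mul1mx mul_diag_mx.
by apply/rowP => j; rewrite !mxE.
Qed.

Lemma transporter_unit : g \in unitmx.
Proof.
rewrite unitmxE det_transporter unitfE !mulf_neq0 //.
- by rewrite invr_eq0 -unitfE -unitmxE.
- apply/prodf_neq0 => k _; rewrite mxE.
  by case: ifP => _; [exact: a_neq0 | case: ifP => _; rewrite ?oner_neq0].
- by rewrite -unitfE -unitmxE.
Qed.

Lemma transporter_form i : g *m (hyp_form H' i)^T = (b i)^-1 *: (hyp_form H i)^T.
Proof.
apply: (can_inj (mulKmx uB)); apply/row_matrixP => k.
rewrite mulmxA row_mul row_transporter [RHS]row_mul -scalemxAl -scalemxAr.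
case: (ltnP k m) => km.
  rewrite !adapted_basis_row_lt // !line_gen_form !scale_scalar_mx mxE km.
  have [<-|ik] := eqVneq i (inord k); first by rewrite !flag_pairing_diag ?mulr0.
  by rewrite scaled // !mulrA mulVf ?mul1r.
have mr : m = r.
  apply/minn_idPr; rewrite leqNgt; apply/negP => /ltnW/minn_idPl mn.
  by move: km; rewrite mn leqNgt ltn_ord.
have iS : i \in init_set by rewrite inE mr ltn_ord.
have [_ rH _] := fl i; have [_ rH' _] := fl' i.
have /eqP -> : row k (adapted_basis L' H') *m (hyp_form H' i)^T == 0.
  by rewrite -sub_hypE // (submx_trans (adapted_basis_row_ge _ _ km)) ?cap_space_sub.
have /eqP -> : row k (adapted_basis L H) *m (hyp_form H i)^T == 0.
  by rewrite -sub_hypE // (submx_trans (adapted_basis_row_ge _ _ km)) ?cap_space_sub.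
by rewrite !scaler0.
Qed.

Lemma transporter_line i : line_gen L i *m g = a i *: line_gen L' i.
Proof.
have [im|mi] := ltnP i m.
  have := row_transporter (Ordinal (leq_trans im (geq_minl n r))).
  by rewrite row_mul !adapted_basis_row_lt //= inord_val mxE im inord_val.
have mn : m = n.
  apply/minn_idPl; rewrite leqNgt; apply/negP => /ltnW/minn_idPr rm.
  by move: mi; rewrite rm leqNgt ltn_ord.
apply/eqP; rewrite -subr_eq0 -submx0.
have -> : (0 : 'M_n) = cap_space H'.
  by apply/esym/eqP; rewrite -mxrank_eq0; case: gp' => _ -> _ _; rewrite card_init_set mn subnn.
apply/sub_bigcapmxP => k; rewrite inE => km; have [_ rH' _] := fl' k.
have ki : k != i by apply: contraTneq km => ->; rewrite -leqNgt.
rewrite sub_hypE // mulmxBl -mulmxA transporter_form -scalemxAl -scalemxAr.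
by rewrite !line_gen_form !scale_scalar_mx scaled // !mulrA mulVf ?mul1r ?subrr.
Qed.

Lemma transporter_transports : transports L H L' H' g.
Proof.
move=> i; have [rL rH _] := fl i; have [rL' rH' _] := fl' i; split.
  apply/andP; split.
    by rewrite (submx_trans (submxMr _ (line_gen_span rL))) // transporter_line scalemx_sub ?line_gen_sub.
  rewrite (submx_trans (line_gen_span rL')) // -[line_gen L' i](scalerK (a_neq0 i)).
  by rewrite -transporter_line scalemx_sub // submxMr ?line_gen_sub.
have HgH' : (H i *m g <= H' i)%MS.
  by rewrite sub_hypE // -mulmxA transporter_form -scalemxAr hyp_form_ker scaler0.
have := mxrank_leqif_eq HgH'; rewrite mxrankMfree ?row_free_unit ?transporter_unit // rH rH'.
by move/leqif_refl.
Qed.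

End Transporter.

Lemma exists_transport L H L' H' (a b : 'I_r -> F) :
  is_flag_tuple L H -> is_flag_tuple L' H' ->
  gp_subtuple L H init_set -> gp_subtuple L' H' init_set ->
  (forall j, a j != 0) -> (forall i, b i != 0) ->
  (forall i j, i != j -> flag_pairing L H i j = b i * a j * flag_pairing L' H' i j) ->
  exists2 g, g \in unitmx & transports L H L' H' g.
Proof.
move=> fl fl' gp gp' a_neq0 b_neq0 scaled; exists (transporter L H L' H' a 1).
  exact: transporter_unit (oner_neq0 F).
exact: transporter_transports (oner_neq0 F) scaled.
Qed.

Lemma exists_transport_det L H L' H' (a b : 'I_r -> F) d :
  is_flag_tuple L H -> is_flag_tuple L' H' ->
  gp_subtuple L H init_set -> gp_subtuple L' H' init_set ->
  (forall j, a j != 0) -> (forall i, b i != 0) ->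
  (forall i j, i != j -> flag_pairing L H i j = b i * a j * flag_pairing L' H' i j) ->
  (r < n)%N -> d != 0 -> exists g, \det g = d /\ transports L H L' H' g.
Proof.
move=> fl fl' gp gp' a_neq0 b_neq0 scaled rn d_neq0.
have : \det (transporter L H L' H' a 1) != 0.
  by rewrite -unitfE -unitmxE (transporter_unit _ _ _ _ a_neq0 (oner_neq0 F)).
set D := \det _ => D_neq0; exists (transporter L H L' H' a (d / D)); split.
  by rewrite det_transporter_scale // divfK.
by apply: transporter_transports scaled; rewrite ?mulf_neq0 ?invr_eq0.
Qed.

Lemma transports_self_scalar L H g : (n <= r)%N -> (3 <= r)%N ->
  is_flag_tuple L H -> gp_subtuple L H init_set ->
  (forall i j, i != j -> flag_pairing L H i j != 0) ->
  g \in unitmx -> transports L H L H g -> exists c, g = c%:M.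
Proof.
move=> nr r_ge3 fl gp pairing_neq0 ug tr.
have [a [b [_ _ Ea scaled]]] := transport_scalings (ltn0Sn n') fl fl ug tr.
have ab i j : i != j -> a j = b i.
  by move=> ij; apply/esym/(mulIf (pairing_neq0 _ _ ij)); exact: scaled.
have a_const j : a j = a ord0.
  have [|i] := @exists_notin _ [:: j; ord0]; first by rewrite card_ord.
  by rewrite !inE negb_or => /andP[ij i0]; rewrite (ab i j ij) (ab i ord0 i0).
have uB := adapted_basis_unit fl gp.
have Bg : adapted_basis L H *m g = a ord0 *: adapted_basis L H.
  apply/row_matrixP => k; have km : (k < m)%N by rewrite (minn_idPl nr) ltn_ord.
  by rewrite row_mul linearZ /= !adapted_basis_row_lt // Ea a_const.
exists (a ord0).
by rewrite -[g](mulKmx uB) Bg -scalemxAr mulVmx // scalemx1.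
Qed.

End Construction.

(** * Orbits in a fibre of theta *)

Lemma exists_pos_root (R : rcfType) (n : nat) (y : R) : (0 < n)%N -> 0 < y ->
  exists2 t : R, 0 < t & t ^+ n = y.
Proof.
move=> n_gt0 y_gt0; pose p : {poly R} := 'X^n - y%:P.
have pE x : p.[x] = x ^+ n - y by rewrite !hornerE.
have [x /andP[x_ge0 _] /rootP] : exists2 x, 0 <= x <= 1 + y & root p x.
  apply: poly_ivt; first by rewrite ler_wpDr // ltW.
  rewrite !pE expr0n (gtn_eqF n_gt0) sub0r oppr_le0 (ltW y_gt0) subr_ge0.
  by rewrite (le_trans _ (ler_eXnr n_gt0 _)) ?lerDr ?lerDl ?ltW.
rewrite pE => /eqP; rewrite subr_eq0 => /eqP xy; exists x => //.
by rewrite lt_neqAle x_ge0 andbT; apply: contraTneq y_gt0 => x0; rewrite -xy -x0 expr0n (gtn_eqF n_gt0) ltxx.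
Qed.

Lemma exists_odd_root (R : rcfType) (n : nat) (y : R) : odd n -> exists t : R, t ^+ n = y.
Proof.
move=> n_odd; have n_gt0 : (0 < n)%N by case: n n_odd.
case: (ltgtP y 0) => [y_lt0|y_gt0|->]; last by exists 0; rewrite expr0n (gtn_eqF n_gt0).
  have [t _ ht] : exists2 t : R, 0 < t & t ^+ n = - y by apply: exists_pos_root; rewrite ?oppr_gt0.
  by exists (- t); rewrite exprNn -signr_odd n_odd expr1 ht mulN1r opprK.
by have [t _ ht] := exists_pos_root n_gt0 y_gt0; exists t.
Qed.

Section SLEquivalence.
Variables (R : rcfType) (n r : nat).
Implicit Types (L H : 'I_r -> 'M[R]_n).

Lemma SL_equiv_scale L H L' H' g t : (0 < n)%N -> t ^+ n * \det g = 1 ->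
  transports L H L' H' g -> SL_equiv L H L' H'.
Proof.
move=> n_gt0 det1 tr; exists (t *: g); split; first by rewrite detZ.
apply: transportsZ tr; apply/eqP => t0; move: det1.
by rewrite t0 expr0n (gtn_eqF n_gt0) mul0r => /eqP; rewrite eq_sym oner_eq0.
Qed.

Lemma SL_equiv_of_det_gt0 L H L' H' g : (0 < n)%N -> 0 < \det g ->
  transports L H L' H' g -> SL_equiv L H L' H'.
Proof.
move=> n_gt0 det_gt0; have [|t _ ht] := @exists_pos_root _ n (\det g)^-1 n_gt0.
  by rewrite invr_gt0.
by apply: (SL_equiv_scale (t := t) n_gt0); rewrite ht mulVf // lt0r_neq0.
Qed.

Lemma SL_equiv_of_odd L H L' H' g : odd n -> g \in unitmx ->
  transports L H L' H' g -> SL_equiv L H L' H'.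
Proof.
move=> n_odd ug; have [t ht] := exists_odd_root (\det g)^-1 n_odd.
by apply: (SL_equiv_scale (t := t) (odd_gt0 n_odd)); rewrite ht mulVf // -unitfE -unitmxE.
Qed.

End SLEquivalence.

Section Fibres.
Variables (R : realType) (n' r' : nat).
Local Notation n := n'.+1.
Local Notation r := r'.+1.
Implicit Types (L H : 'I_r -> 'M[R]_n).

Lemma not_SL_equiv_det_lt0 L H (M : 'M[R]_n) : (3 <= r)%N -> (n <= r)%N -> ~~ odd n ->
  in_U L H -> \det M < 0 -> ~ SL_equiv (fun i => L i *m M) (fun i => H i *m M) L H.
Proof.
move=> r_ge3 nr n_even U detM [h [det_h tr]]; have [fl _] := U.
have n_ge2 : (2 <= n)%N by rewrite ltnS lt0n; apply: contraNneq n_even => ->.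
have uMh : M *m h \in unitmx by rewrite unitmxE det_mulmx det_h mulr1 unitfE ltr0_neq0.
have [c Mh] := transports_self_scalar nr r_ge3 fl (in_U_gp_subtuple U (card_init_set n' r'))
  (fun i j => flag_pairing_neq0 n_ge2 U) uMh (transportsM (transports_mulmx L H M) tr).
have := exprn_even_ge0 c n_even; rewrite -det_scalar -Mh det_mulmx det_h mulr1.
by rewrite leNgt detM.
Qed.

Lemma SL_equiv_or_twisted L H L'' H'' (M : 'M[R]_n) : (2 <= n)%N -> (3 <= r)%N ->
  in_U L H -> in_U L'' H'' -> theta_eq L'' H'' L H -> \det M < 0 ->
  SL_equiv L'' H'' L H \/ SL_equiv L'' H'' (fun i => L i *m M) (fun i => H i *m M).
Proof.
move=> n_ge2 r_ge3 U U'' th detM; have [fl _] := U; have [fl'' _] := U''.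
have [a [b [a_neq0 b_neq0 scaled]]] := theta_eq_scaling n_ge2 r_ge3 U'' U th.
have [g ug tr] := exists_transport fl'' fl (in_U_gp_subtuple U'' (card_init_set n' r'))
  (in_U_gp_subtuple U (card_init_set n' r')) a_neq0 b_neq0 scaled.
move: ug; rewrite unitmxE unitfE; case: (ltgtP (\det g) 0) => // [det_lt0|det_gt0] _.
  right; apply: (@SL_equiv_of_det_gt0 _ _ _ _ _ _ _ (g *m M)) => //.
    by rewrite det_mulmx nmulr_rgt0.
  exact: transportsM tr (transports_mulmx L H M).
by left; apply: SL_equiv_of_det_gt0 tr.
Qed.

Lemma theta_injective_of : (2 <= n)%N -> (3 <= r)%N -> odd n \/ (r < n)%N ->
  theta_injective R n r.
Proof.
move=> n_ge2 r_ge3 odd_or_rn L H L' H' U U' th; have [fl _] := U; have [fl' _] := U'.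
have [a [b [a_neq0 b_neq0 scaled]]] := theta_eq_scaling n_ge2 r_ge3 U U' th.
have gp := in_U_gp_subtuple U (card_init_set n' r').
have gp' := in_U_gp_subtuple U' (card_init_set n' r').
have [rn|nr] := ltnP r n.
  have [g [det1 tr]] := exists_transport_det fl fl' gp gp' a_neq0 b_neq0 scaled rn (oner_neq0 R).
  by exists g.
have [n_odd|] := odd_or_rn; last by rewrite ltnNge nr.
have [g ug tr] := exists_transport fl fl' gp gp' a_neq0 b_neq0 scaled.
exact: SL_equiv_of_odd n_odd ug tr.
Qed.

Definition reflection : 'M[R]_n := diag_mx (\row_(k < n) if k == ord0 then -1 else 1).

Lemma det_reflection : \det reflection = -1.
Proof.
rewrite det_diag (bigD1 ord0) //= mxE eqxx big1 ?mulr1 // => k /negbTE k0.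
by rewrite mxE k0.
Qed.

Lemma theta_two_to_one_of : (3 <= r)%N -> (n <= r)%N -> ~~ odd n -> theta_two_to_one R n r.
Proof.
move=> r_ge3 nr n_even L H U; have [fl _] := U.
have n_ge2 : (2 <= n)%N by rewrite ltnS lt0n; apply: contraNneq n_even => ->.
have det_lt0 : \det reflection < 0 by rewrite det_reflection oppr_lt0 ltr01.
have uJ : reflection \in unitmx by rewrite unitmxE det_reflection unitrN unitr1.
exists (fun i => L i *m reflection), (fun i => H i *m reflection); split.
- exact: in_U_mulmx.
- by apply: theta_eq_transport (transports_mulmx L H _) => //; exact: is_flag_tupleMr.
- exact: not_SL_equiv_det_lt0.
- by move=> L'' H'' U'' th; apply: SL_equiv_or_twisted.
Qed.

End Fibres.

Theorem proposition4p11 (R : realType) (n r : nat) :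
  (3 <= n)%N -> (3 <= r)%N ->
  ((odd n \/ (r < n)%N) -> theta_injective R n r) /\
  (((n <= r)%N /\ ~~ odd n) -> theta_two_to_one R n r).
Proof.
case: n => [//|n']; case: r => [//|r'] n_ge3 r_ge3; split.
  exact: theta_injective_of (ltnW n_ge3) r_ge3.
by case=> nr n_even; apply: theta_two_to_one_of.
Qed.
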